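(* Let $V$ and $Z$ be $5$-dimensional even isotropic subspaces of $\mathbb{F}_2^{10}$. Then there exist $5$-dimensional even isotropic subspaces $V_0=V,V_1,\dots,V_n=Z$ of $\mathbb{F}_2^{10}$ and $3$-dimensional even isotropic subspaces $M_1,\dots,M_n$ of $\mathbb{F}_2^{10}$ such that $M_i\subset V_{i-1}\cap V_i$ for all $i=1,\dots,n$.
   Context: Elements of $\mathbb{F}_2^{10}$ are written $m=[\varepsilon,\delta]$ with $\varepsilon,\delta\in\mathbb{F}_2^5$; $m$ is even if $\varepsilon\cdot\delta=0\in\mathbb{F}_2$. For $m=[\varepsilon,\delta]$, $n=[\varepsilon_1,\delta_1]$ put $e(m,n)=(-1)^{\varepsilon\cdot\delta_1+\varepsilon_1\cdot\delta}$. A linear subspace $V$ is isotropic if $e(m,n)=1$ for all $m,n\in V$, and it is even isotropic if moreover all its elements are even. *)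

From HB Require Import structures.
From mathcomp Require Import all_boot all_order all_algebra.
Set Implicit Arguments. Unset Strict Implicit. Unset Printing Implicit Defensive.
Import GRing.Theory.
Local Open Scope ring_scope.

Definition F10 := 'rV['F_2]_(5 + 5).

Definition dot5 (a b : 'rV['F_2]_5) : 'F_2 := \sum_(i < 5) a 0 i * b 0 i.

Definition epsv (m : F10) : 'rV['F_2]_5 := lsubmx m.
Definition deltav (m : F10) : 'rV['F_2]_5 := rsubmx m.

Definition even_vec (m : F10) : Prop := dot5 (epsv m) (deltav m) = 0.

(* exponent of e(m,n) = (-1)^(eps.delta1 + eps1.delta), computed in F_2 *)
Definition e_exp (m n : F10) : 'F_2 :=
  dot5 (epsv m) (deltav n) + dot5 (epsv n) (deltav m).

Definition isotropic (V : {vspace F10}) : Prop :=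
  forall m n, m \in V -> n \in V -> e_exp m n = 0.

Definition even_isotropic (V : {vspace F10}) : Prop :=
  isotropic V /\ (forall m, m \in V -> even_vec m).

From HB Require Import structures.
From mathcomp Require Import all_boot all_order all_algebra.
From mathcomp Require Import ring.
Set Implicit Arguments.
Unset Strict Implicit.
Unset Printing Implicit Defensive.
Local Open Scope ring_scope.
Import GRing.Theory.

(* Measure the distance from V to Z by 5 - dim (V :&: Z). If V != Z, pick
   z in Z outside V. The hyperplane of V orthogonal to z contains V :&: Z and
   has dimension at least 4, so it has a 4-dimensional subspace A containing
   V :&: Z; then W := A + <[z]> is again even isotropic of dimension 5 (z is
   even, orthogonal to A, and e(z, z) = 1 in characteristic 2), shares
   the 4-dimensional space A (hence a 3-dimensional M) with V, and meets Z in
   a space strictly larger than V :&: Z. Iterating reaches Z. *)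

Section SubspaceDimension.

Variables (K : fieldType) (vT : vectType K).
Implicit Types (U A : {vspace vT}) (v : vT).

Lemma dimv_add_line U v : v \notin U -> \dim (U + <[v]>) = (\dim U).+1.
Proof.
move=> vNU; have v_neq0 : v != 0 by apply: contraNneq vNU => ->; rewrite mem0v.
rewrite dimv_disjoint_sum ?dim_vline ?v_neq0 ?addn1 //.
apply/eqP; rewrite -subv0; apply/subvP => w /memv_capP[wU /vlineP[k w_def]].
rewrite memv0 w_def; have [->|k_neq0] := eqVneq k 0; first by rewrite scale0r.
by case/negP: vNU; rewrite -(scalerK k_neq0 v) memvZ // -w_def.
Qed.

Lemma exists_subspace_between U A n :
  (U <= A)%VS -> (\dim U <= n <= \dim A)%N ->
  exists W : {vspace vT}, [/\ (U <= W)%VS, (W <= A)%VS & \dim W = n].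
Proof.
move=> sUA /andP[leUn lenA]; have [k def_k] : exists k, (n - \dim U)%N = k by exists (n - \dim U)%N.
elim: k U sUA leUn def_k => [|k IHk] U sUA leUn def_k.
  by exists U; split; last by apply/eqP; rewrite eqn_leq leUn -subn_eq0 def_k.
have ltUn : (\dim U < n)%N by rewrite -subn_gt0 def_k.
have /subvPn[a aA aNU] : ~~ (A <= U)%VS.
  by apply: contraTN ltUn => /dimvS leAU; rewrite -leqNgt (leq_trans lenA).
have dimUa := dimv_add_line aNU.
have [|||W [sUaW sWA dimW]] := IHk (U + <[a]>)%VS.
- by rewrite subv_add sUA -memvE.
- by rewrite dimUa.
- by rewrite dimUa subnS def_k.
by exists W; split=> //; apply: subv_trans sUaW; apply: addvSl.
Qed.

Lemma dimv_cap_lker_ge (f : 'Hom(vT, K^o)) U :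
  ((\dim U).-1 <= \dim (U :&: lker f))%N.
Proof.
have le_img1 : (\dim (f @: U) <= 1)%N by rewrite (leq_trans (dimvS (subvf _))) // dimvf.
by rewrite -(limg_ker_dim f U) -subn1 leq_subLR addnC leq_add2r.
Qed.

End SubspaceDimension.

Lemma dot5Dl a b c : dot5 (a + b) c = dot5 a c + dot5 b c.
Proof. by rewrite /dot5 -big_split; apply: eq_bigr => i _; rewrite !mxE mulrDl. Qed.

Lemma dot5Dr a b c : dot5 c (a + b) = dot5 c a + dot5 c b.
Proof. by rewrite /dot5 -big_split; apply: eq_bigr => i _; rewrite !mxE mulrDr. Qed.

Lemma dot5Zl k a c : dot5 (k *: a) c = k * dot5 a c.
Proof. by rewrite /dot5 mulr_sumr; apply: eq_bigr => i _; rewrite !mxE mulrA. Qed.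

Lemma dot5Zr k a c : dot5 c (k *: a) = k * dot5 c a.
Proof. by rewrite /dot5 mulr_sumr; apply: eq_bigr => i _; rewrite !mxE mulrCA. Qed.

Lemma e_expC m n : e_exp m n = e_exp n m.
Proof. by rewrite /e_exp addrC. Qed.

Lemma e_expDr m a b : e_exp m (a + b) = e_exp m a + e_exp m b.
Proof. by rewrite /e_exp /epsv /deltav !linearD /= dot5Dr dot5Dl; ring. Qed.

Lemma e_expZr m k a : e_exp m (k *: a) = k * e_exp m a.
Proof. by rewrite /e_exp /epsv /deltav !linearZ /= dot5Zr dot5Zl mulrDr. Qed.

Lemma e_expDl m a b : e_exp (a + b) m = e_exp a m + e_exp b m.
Proof. by rewrite !(e_expC _ m) e_expDr. Qed.

Lemma e_expZl m k a : e_exp (k *: a) m = k * e_exp a m.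
Proof. by rewrite !(e_expC _ m) e_expZr. Qed.

Lemma e_exp_xx m : e_exp m m = 0.
Proof. by rewrite /e_exp (addrr_pchar2 (pchar_Fp (isT : prime 2))). Qed.

Definition qform (m : F10) : 'F_2 := dot5 (epsv m) (deltav m).

Lemma qformD a b : qform (a + b) = qform a + qform b + e_exp a b.
Proof. by rewrite /qform /e_exp /epsv /deltav !linearD /= dot5Dr !dot5Dl; ring. Qed.

Lemma qformZ k a : qform (k *: a) = k * k * qform a.
Proof. by rewrite /qform /epsv /deltav !linearZ /= dot5Zr dot5Zl mulrA. Qed.

Definition e_pair (z : F10) : F10 -> ('F_2)^o := e_exp z.

Lemma e_pair_is_linear z : linear (e_pair z).
Proof. by move=> k a b; rewrite /e_pair e_expDr e_expZr. Qed.

HB.instance Definition _ z :=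
  GRing.isLinear.Build 'F_2 F10 ('F_2)^o *:%R (e_pair z) (e_pair_is_linear z).

Lemma memv_ker_e_pair z m : (m \in lker (linfun (e_pair z))) = (e_exp z m == 0).
Proof. by rewrite memv_ker lfunE. Qed.

Lemma even_isotropicS (M W : {vspace F10}) :
  (M <= W)%VS -> even_isotropic W -> even_isotropic M.
Proof.
move=> /subvP sMW [isoW evenW]; split=> [m n /sMW mW /sMW nW|m /sMW mW].
  exact: isoW.
exact: evenW.
Qed.

Lemma even_isotropic_add_line (A : {vspace F10}) z :
  even_isotropic A -> even_vec z -> (forall a, a \in A -> e_exp z a = 0) ->
  even_isotropic (A + <[z]>).
Proof.
move=> [isoA evenA] even_z orth_z.
have memAz w : w \in (A + <[z]>)%VS -> exists a k, [/\ a \in A & w = a + k *: z].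
  by case/memv_addP=> a aA [_ /vlineP[k ->] ->]; exists a, k.
split=> [m n /memAz[a [k [aA ->]]] /memAz[b [l [bA ->]]]|m /memAz[a [k [aA ->]]]].
  rewrite e_expDl !e_expDr !e_expZl !e_expZr isoA // e_exp_xx.
  by rewrite (e_expC a) !orth_z // !mulr0 !addr0.
rewrite /even_vec -/(qform _) qformD qformZ e_expZr e_expC orth_z //.
by rewrite [qform z]even_z [qform a]evenA // !mulr0 !addr0.
Qed.

Definition even_lagrangian (V : {vspace F10}) : Prop :=
  \dim V = 5%N /\ even_isotropic V.

Definition adjacent_via (V M W : {vspace F10}) : Prop :=
  [/\ \dim M = 3%N, even_isotropic M & (M <= V :&: W)%VS].

Lemma exists_adjacent_closer (V Z : {vspace F10}) :
  even_lagrangian V -> even_lagrangian Z -> V != Z ->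
  exists M W, [/\ even_lagrangian W, adjacent_via V M W
                & (\dim (V :&: Z) < \dim (W :&: Z))%N].
Proof.
move=> [dimV eiV] [dimZ [isoZ evenZ]] neqVZ.
have /subvPn[z zZ zNV] : ~~ (Z <= V)%VS.
  by apply: contra neqVZ => sZV; rewrite eq_sym eqEdim sZV dimV dimZ.
pose A := (V :&: lker (linfun (e_pair z)))%VS.
have sVZ_A : (V :&: Z <= A)%VS.
  by apply/subvP=> w /memv_capP[wV wZ]; rewrite memv_cap wV memv_ker_e_pair isoZ.
have dimA : (4 <= \dim A)%N by have := dimv_cap_lker_ge (linfun (e_pair z)) V; rewrite dimV.
have zNVZ : z \notin (V :&: Z)%VS by rewrite memv_cap (negPf zNV).
have sVZz_Z : (V :&: Z + <[z]> <= Z)%VS by rewrite subv_add capvSr -memvE.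
have dimVZ : (\dim (V :&: Z) <= 4)%N.
  by have := dimvS sVZz_Z; rewrite dimv_add_line // dimZ.
have [|A4 [sVZ_A4 sA4A dimA4]] := exists_subspace_between (n := 4) sVZ_A.
  by rewrite dimVZ dimA.
have sA4V : (A4 <= V)%VS by apply: subv_trans sA4A (capvSl _ _).
have [|M [_ sMA4 dimM]] := exists_subspace_between (n := 3) (sub0v A4).
  by rewrite dimv0 dimA4.
have sMV := subv_trans sMA4 sA4V.
have zNA4 : z \notin A4 by apply: contra zNV => /(subvP sA4V).
exists M, (A4 + <[z]>)%VS; split.
- split; first by rewrite dimv_add_line // dimA4.
  apply: even_isotropic_add_line; [exact: even_isotropicS eiV | exact: evenZ |].
  by move=> a /(subvP sA4A) /memv_capP[_]; rewrite memv_ker_e_pair => /eqP.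
- split=> //; first exact: even_isotropicS eiV.
  by rewrite subv_cap sMV (subv_trans sMA4 (addvSl _ _)).
- rewrite -(dimv_add_line zNVZ) dimvS // subv_cap sVZz_Z andbT.
  exact: addvS.
Qed.

Section Chain.

Variables (T : eqType) (L : Type) (P : T -> Prop) (link : T -> L -> T -> Prop).
(* [m0] only fills the (empty) list of links of the one-term chain. *)
Variables (dist : T -> nat) (z : T) (m0 : L).
Hypothesis Pz : P z.
Hypothesis link_closer : forall x, P x -> x != z ->
  exists m y, [/\ P y, link x m y & (dist y < dist x)%N].

Lemma exists_chain x : P x ->
  exists (n : nat) (xs : nat -> T) (ms : nat -> L),
    [/\ xs 0%N = x, xs n = z,
        (forall i, (i <= n)%N -> P (xs i)) &
        (forall i, (1 <= i <= n)%N -> link (xs i.-1) (ms i) (xs i))].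
Proof.
elim: {x}(dist x).+1 {-2}x (ltnSn (dist x)) => // d IHd x lt_xd Px.
have [-> | neq_xz] := eqVneq x z.
  by exists 0%N, (fun=> z), (fun=> m0); split=> // [[]].
have [m [y [Py link_xmy lt_yx]]] := link_closer Px neq_xz.
have [|n [xs [ms [xs0 xsn Pxs link_xs]]]] := IHd y _ Py.
  exact: leq_trans lt_yx lt_xd.
exists n.+1, (fun i => if i is i'.+1 then xs i' else x).
exists (fun i => if i == 1%N then m else ms i.-1); split=> //.
- by case=> [|i] //=; rewrite ltnS => /Pxs.
- by case=> [//|[|i]] //= le_in; [rewrite xs0 | exact: (link_xs i.+1)].
Qed.

End Chain.

Theorem mainTheorem5 (V Z : {vspace F10}) :
  \dim V = 5%N -> \dim Z = 5%N -> even_isotropic V -> even_isotropic Z ->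
  exists (n : nat) (Vs Ms : nat -> {vspace F10}),
    [/\ Vs 0%N = V, Vs n = Z,
        (forall i, (i <= n)%N -> \dim (Vs i) = 5%N /\ even_isotropic (Vs i)) &
        (forall i, (1 <= i <= n)%N ->
           [/\ \dim (Ms i) = 3%N, even_isotropic (Ms i)
             & (Ms i <= Vs i.-1 :&: Vs i)%VS])].
Proof.
move=> dimV dimZ eiV eiZ; have lagZ : even_lagrangian Z by [].
apply: (@exists_chain _ _ even_lagrangian adjacent_via
          (fun W => \dim Z - \dim (W :&: Z))%N Z 0%VS lagZ) => // W lagW neqWZ.
have [M [W' [lagW' adjM lt_dim]]] := exists_adjacent_closer lagW lagZ neqWZ.
exists M, W'; split=> //; apply: ltn_sub2l (leq_trans lt_dim _) lt_dim.
by rewrite dimvS ?capvSr.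
Qed.
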